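(* Let $(\Omega,\mathcal A)$ be a Borel space, $(\Omega,X_\bullet)$ a Borel field of proper metric spaces, and $(F^n_\bullet)_{n\ge1}$ a sequence of Borel subfields such that each $F^n_\omega$ is closed. Then the subfield $\bigcap_n F^n_\bullet$, defined by $\omega\mapsto\bigcap_{n\ge1}F^n_\omega$, is a Borel subfield.
   Context: Borel field of metric spaces: $(X_\omega,d_\omega)_{\omega\in\Omega}$ metric spaces; a section is $x_\bullet=(x_\omega)$, $x_\omega\in X_\omega$. A Borel structure is a set $\mathcal L(\Omega,X_\bullet)$ of sections such that (a) $\omega\mapsto d_\omega(x_\omega,y_\omega)$ is Borel for all $x_\bullet,y_\bullet\in\mathcal L$; (b) any section $y_\bullet$ with $\omega\mapsto d_\omega(x_\omega,y_\omega)$ Borel for all $x_\bullet\in\mathcal L$ lies in $\mathcal L$; (c) there is a countable $\mathcal D=\{x^n_\bullet\}\subseteq\mathcal L$ (fundamental family) with $\{x^n_\omega\}_n$ dense in $X_\omega$ for all $\omega$. For Borel $\Omega'$, $\mathcal L(\Omega',X_\bullet)$ = restrictions to $\Omega'$ of Borel sections. A subfield is $A_\bullet=(A_\omega)$ with $A_\omega\subseteq X_\omega$ (possibly empty); it is Borel if $\Omega'=\{\omega:A_\omega\ne\emptyset\}\in\mathcal A$ and there are countably many $y^n_\bullet\in\mathcal L(\Omega',X_\bullet)$ with $y^n_\omega\in A_\omega$ and $A_\omega\subseteq\overline{\{y^n_\omega\}_n}$ for all $\omega\in\Omega'$. Proper: closed balls are compact. *)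

From Stdlib Require Import Reals List.
Open Scope R_scope.

Definition set (T : Type) := T -> Prop.

Record sigma_algebra {T : Type} (A : set T -> Prop) : Prop := {
  sa_full  : A (fun _ => True);
  sa_compl : forall S, A S -> A (fun x => ~ S x);
  sa_union : forall S : nat -> set T, (forall n, A (S n)) -> A (fun x => exists n, S n x)
}.

Definition openR (U : set R) : Prop :=
  forall x, U x -> exists eps, 0 < eps /\ forall y, Rabs (y - x) < eps -> U y.

Definition borelR (B : set R) : Prop :=
  forall A : set R -> Prop, sigma_algebra A -> (forall U, openR U -> A U) -> A B.

Definition borel_fun {Omega : Type} (A : set Omega -> Prop) (f : Omega -> R) : Prop :=
  forall B, borelR B -> A (fun w => B (f w)).

Record is_metric {T : Type} (d : T -> T -> R) : Prop := {
  met_zero : forall x y, d x y = 0 <-> x = y;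
  met_sym  : forall x y, d x y = d y x;
  met_tri  : forall x y z, d x z <= d x y + d y z
}.

Definition m_open {T : Type} (d : T -> T -> R) (U : set T) : Prop :=
  forall x, U x -> exists eps, 0 < eps /\ forall y, d x y < eps -> U y.

Definition m_compact {T : Type} (d : T -> T -> R) (K : set T) : Prop :=
  forall (I : Type) (U : I -> set T),
    (forall i, m_open d (U i)) ->
    (forall x, K x -> exists i, U i x) ->
    exists l : list I, forall x, K x -> exists i, In i l /\ U i x.

Definition closed_ball {T : Type} (d : T -> T -> R) (x : T) (r : R) : set T :=
  fun y => d x y <= r.

Definition proper_metric {T : Type} (d : T -> T -> R) : Prop :=
  forall x r, m_compact d (closed_ball d x r).

Definition m_closure {T : Type} (d : T -> T -> R) (S : set T) : set T :=
  fun x => forall eps, 0 < eps -> exists y, S y /\ d x y < eps.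

Definition m_closed {T : Type} (d : T -> T -> R) (S : set T) : Prop :=
  forall x, m_closure d S x -> S x.

Record borel_field {Omega : Type} (A : set Omega -> Prop) (X : Omega -> Type)
    (d : forall w, X w -> X w -> R) (L : (forall w, X w) -> Prop) : Prop := {
  bf_metric : forall w, is_metric (d w);
  bf_a : forall x y, L x -> L y -> borel_fun A (fun w => d w (x w) (y w));
  bf_b : forall y : (forall w, X w),
           (forall x, L x -> borel_fun A (fun w => d w (x w) (y w))) -> L y;
  bf_c : exists D : nat -> (forall w, X w),
           (forall n, L (D n)) /\
           forall w (x : X w), m_closure (d w) (fun z => exists n, z = D n w) x
}.

(** Borel subfields. Sections in L(Omega', X) are restrictions to Omega' of
    sections in L, so we quantify over sections in L and only use their values
    on Omega'. *)
Definition borel_subfield {Omega : Type} (A : set Omega -> Prop) (X : Omega -> Type)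
    (d : forall w, X w -> X w -> R) (L : (forall w, X w) -> Prop)
    (F : forall w, set (X w)) : Prop :=
  A (fun w => exists x, F w x) /\
  exists y : nat -> (forall w, X w),
    (forall n, L (y n)) /\
    forall w, (exists x, F w x) ->
      (forall n, F w (y n w)) /\
      (forall x, F w x -> m_closure (d w) (fun z => exists n, z = y n w) x).

From Stdlib Require Import Reals Lra Lia List Wf_nat.
From Stdlib Require Import Classical ClassicalEpsilon FunctionalExtensionality PropExtensionality.
From Stdlib Require Cantor.
Open Scope R_scope.

(** Let [D] be a fundamental family of the field and, for each [n], [Y n] a fundamental
    sequence of [F n].  For [m : nat] and [rho > 0] consider the target
    [G_w(m, rho)] = (intersection of all [F n w]) ∩ (closed ball of center [D m w],
    radius [rho]).  A dense sequence meets the inner conditions of shapes with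
      a common point; conversely, in a proper space, bounded simultaneous witnesses of
      all inner conditions force a common point (compactness).
    - Fibrewise construction: hence "G_w(m, rho) meets a ball around [D c w]" is a
      countable combination of conditions [d w (x w) (y w) < a] on Borel sections, so
      it is measurable in [w].  Least indices give a measurable Cauchy sequence
      [D (idx s w) w] converging into [G_w(m, rho)]; its limit is a Borel section.
      These sections, for all [m] and dyadic [rho], form the required dense sequence. *)

Definition tol (k : nat) : R := (/2) ^ k.

Lemma tol_pos k : 0 < tol k.
Proof. unfold tol. apply pow_lt. lra. Qed.

Lemma tol_0 : tol 0 = 1.
Proof. reflexivity. Qed.

Lemma tol_S k : tol (S k) = tol k / 2.
Proof. unfold tol. simpl. lra. Qed.

Lemma tol_antimono k k' : (k <= k')%nat -> tol k' <= tol k.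
Proof.
  intros H. induction H as [|k' _ IH]; [lra|].
  rewrite tol_S. pose proof (tol_pos k'). lra.
Qed.

Lemma tol_le1 k : tol k <= 1.
Proof. rewrite <- tol_0. apply tol_antimono. lia. Qed.

Lemma tol_small eps : 0 < eps -> exists k, tol k < eps.
Proof.
  intros Heps. destruct (pow_lt_1_zero (/2)) with (y := eps) as [N HN].
  - rewrite Rabs_pos_eq; lra.
  - exact Heps.
  - exists N. specialize (HN N (le_n _)). pose proof (tol_pos N).
    rewrite Rabs_pos_eq in HN; unfold tol in *; lra.
Qed.

(** Every real number lies within [tol c] below a dyadic point [(a - b) 2^-c] with
    [a, b] natural: the dyadic points form a countable dense family indexed by [nat]. *)
Lemma dyadic_approx (x : R) (c : nat) :
  exists a b : nat, x < (INR a - INR b) * tol c <= x + tol c.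
Proof.
  set (z := up (x / tol c)). destruct (archimed (x / tol c)) as [Hup Hle]. fold z in Hup, Hle.
  exists (Z.to_nat z), (Z.to_nat (- z)).
  assert (Hz : INR (Z.to_nat z) - INR (Z.to_nat (- z)) = IZR z).
  { destruct z; simpl; [lra| |]; rewrite INR_IPR; unfold IZR; ring. }
  rewrite Hz. pose proof (tol_pos c).
  replace x with ((x / tol c) * tol c) by (field; lra).
  set (u := x / tol c) in *. clearbody u. split; nra.
Qed.

(** Least witness of a predicate on [nat], with default [0] when there is none.  It
    is used to make countably many choices measurably in the parameter. *)
Definition is_least (P : nat -> Prop) (j : nat) : Prop :=
  P j /\ forall j', P j' -> (j <= j')%nat.

Definition least (P : nat -> Prop) : nat :=
  match excluded_middle_informative (exists j, P j) with
  | left _ => epsilon (inhabits 0%nat) (is_least P)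
  | right _ => 0%nat
  end.

Lemma least_correct P : (exists j, P j) -> is_least P (least P).
Proof.
  intros Hex. unfold least. destruct excluded_middle_informative as [_|Hno]; [|tauto].
  apply epsilon_spec.
  destruct (dec_inh_nat_subset_has_unique_least_element P (fun n => classic (P n)) Hex)
    as [j [Hj _]].
  exists j. exact Hj.
Qed.

Lemma least_eq P j : least P = j <-> is_least P j \/ (j = 0%nat /\ ~ exists j', P j').
Proof.
  destruct (classic (exists j', P j')) as [Hex|Hno].
  - pose proof (least_correct P Hex) as [Hl Hmin]. split.
    + intros <-. left. split; assumption.
    + intros [[Hj Hjmin]|[_ Hno]]; [|tauto].
      apply Nat.le_antisymm; auto.
  - unfold least. destruct excluded_middle_informative; [tauto|]. split.
    + intros <-. right. auto.
    + intros [[Hj _]|[-> _]]; [|reflexivity]. exfalso. eauto.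
Qed.

Lemma meas_ext {Omega : Type} {A : set Omega -> Prop} (S S' : set Omega) :
  A S -> (forall w, S w <-> S' w) -> A S'.
Proof.
  intros HS Heq. replace S' with S; [exact HS|].
  apply functional_extensionality; intro w. apply propositional_extensionality, Heq.
Qed.

Section SigmaAlgebra.
Context {Omega : Type} {A : set Omega -> Prop} (HA : sigma_algebra A).

Lemma meas_full : A (fun _ => True).
Proof. apply (sa_full _ HA). Qed.

Lemma meas_compl S : A S -> A (fun w => ~ S w).
Proof. apply (sa_compl _ HA). Qed.

Lemma meas_union (S : nat -> set Omega) : (forall n, A (S n)) -> A (fun w => exists n, S n w).
Proof. apply (sa_union _ HA). Qed.

Lemma meas_inter (S : nat -> set Omega) : (forall n, A (S n)) -> A (fun w => forall n, S n w).
Proof.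
  intros HS. eapply meas_ext.
  - apply meas_compl, meas_union. intros n. apply meas_compl, HS.
  - intros w; split.
    + intros Hnot n. apply NNPP. intros Hn. apply Hnot. exists n. exact Hn.
    + intros Hall [n Hn]. auto.
Qed.

Lemma meas_or S S' : A S -> A S' -> A (fun w => S w \/ S' w).
Proof.
  intros H H'. eapply meas_ext.
  - apply (meas_union (fun n => match n with O => S | _ => S' end)). intros [|n]; auto.
  - intros w; split.
    + intros [[|n] Hn]; auto.
    + intros [Hw|Hw]; [exists O | exists 1%nat]; exact Hw.
Qed.

Lemma meas_and S S' : A S -> A S' -> A (fun w => S w /\ S' w).
Proof.
  intros H H'. eapply meas_ext.
  - apply (meas_inter (fun n => match n with O => S | _ => S' end)). intros [|n]; auto.
  - intros w; split.
    + intros Hw. exact (conj (Hw O) (Hw 1%nat)).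
    + intros [Hw Hw'] [|n]; auto.
Qed.

Lemma meas_impl S S' : A S -> A S' -> A (fun w => S w -> S' w).
Proof.
  intros H H'. eapply meas_ext.
  - exact (meas_or _ _ (meas_compl _ H) H').
  - intros w. split; [intros [Hw|Hw]; tauto|].
    intros Himp. destruct (classic (S w)); auto.
Qed.

Lemma meas_const (P : Prop) : A (fun _ => P).
Proof.
  destruct (classic P) as [HP|HP].
  - eapply meas_ext; [apply meas_full|]. tauto.
  - eapply meas_ext; [apply meas_compl, meas_full|]. tauto.
Qed.

Lemma meas_least (P : Omega -> nat -> Prop) :
  (forall j, A (fun w => P w j)) -> forall j, A (fun w => least (P w) = j).
Proof.
  intros HP j. eapply meas_ext; [|intros w; symmetry; apply least_eq].
  apply meas_or.
  - apply meas_and; [apply HP|].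
    apply meas_inter. intros j'. apply meas_impl; [apply HP | apply meas_const].
  - apply meas_and; [apply meas_const|]. apply meas_compl, meas_union, HP.
Qed.

Lemma meas_dist_to_point (f : Omega -> R) :
  (forall a, A (fun w => f w < a)) -> forall q r, A (fun w => Rabs (f w - q) < r).
Proof.
  intros Hf q r. eapply meas_ext.
  - apply meas_and; [apply (Hf (q + r))|].
    apply (meas_union (fun k w => ~ f w < q - r + tol k)). intros k. apply meas_compl, Hf.
  - intros w; split.
    + intros [Hlt [k Hk]]. pose proof (tol_pos k). apply Rabs_def1; lra.
    + intros Hw. apply Rabs_def2 in Hw. split; [lra|].
      destruct (tol_small (f w - (q - r))) as [k Hk]; [lra|]. exists k. lra.
Qed.

(** [f] is Borel as soon as all sublevel sets [{f < a}] are measurable: every open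
    set of reals is a countable union of dyadic intervals. *)
Lemma borel_of_sublevels (f : Omega -> R) :
  (forall a, A (fun w => f w < a)) -> borel_fun A f.
Proof.
  intros Hf B HB. apply (HB (fun B => A (fun w => B (f w)))).
  { split; [apply meas_full | intros S HS; apply meas_compl, HS
           | intros S HS; apply meas_union, HS]. }
  intros U HU. set (q := fun a b c : nat => (INR a - INR b) * tol c).
  eapply meas_ext.
  - apply (meas_union (fun a w => exists b c k,
       (forall y, Rabs (y - q a b c) < tol k -> U y) /\ Rabs (f w - q a b c) < tol k)).
    intros a. do 3 (apply meas_union; intro).
    apply meas_and; [apply meas_const | apply meas_dist_to_point, Hf].
  - intros w; split.
    + intros [a [b [c [k [HUk Hk]]]]]. auto.
    + intros Hw. destruct (HU _ Hw) as [eps [Heps Hball]].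
      destruct (tol_small (eps / 2)) as [k Hk]; [lra|].
      destruct (dyadic_approx (f w) (S k)) as [a [b Hab]].
      exists a, b, (S k), k. fold (q a b (S k)) in Hab.
      rewrite tol_S in Hab. pose proof (tol_pos k).
      split.
      * intros y Hy. apply Hball. apply Rabs_def2 in Hy. apply Rabs_def1; lra.
      * apply Rabs_def1; lra.
Qed.

Lemma sublevel_of_borel (f : Omega -> R) a : borel_fun A f -> A (fun w => f w < a).
Proof.
  intros Hf. apply (Hf (fun y => y < a)). intros C _ Hopen. apply Hopen.
  intros x Hx. exists (a - x). split; [lra|]. intros y Hy. apply Rabs_def2 in Hy. lra.
Qed.

End SigmaAlgebra.

Section MetricFacts.
Context {T : Type} {d : T -> T -> R} (Hm : is_metric d).

Lemma metric_refl x : d x x = 0.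
Proof. apply (met_zero _ Hm). reflexivity. Qed.

Lemma metric_sym x y : d x y = d y x.
Proof. apply (met_sym _ Hm). Qed.

Lemma metric_tri x y z : d x z <= d x y + d y z.
Proof. apply (met_tri _ Hm). Qed.

Lemma metric_nonneg x y : 0 <= d x y.
Proof. pose proof (metric_tri x y x). rewrite metric_refl, (metric_sym y x) in H. lra. Qed.

Lemma dist_lt_approx (q : nat -> T) p x a :
  (forall s, d (q s) p <= 3 * tol s) ->
  d x p < a <-> exists s, d x (q s) < a - 3 * tol s.
Proof.
  intros Hq. split.
  - intros Hlt. destruct (tol_small ((a - d x p) / 6)) as [s Hs]; [lra|].
    exists s. pose proof (metric_tri x p (q s)). specialize (Hq s).
    rewrite (metric_sym p) in H. lra.
  - intros [s Hs]. pose proof (metric_tri x (q s) p). specialize (Hq s). lra.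
Qed.

End MetricFacts.

Record shape (T : Type) := Shape {
  body : set T;
  inner : nat -> set T;
  outer : nat -> set T
}.
Arguments Shape {T}. Arguments body {T}. Arguments inner {T}. Arguments outer {T}.

Section Shapes.
Context {T : Type} (d : T -> T -> R).

Record admissible (s : shape T) : Prop := {
  outer_exhaust : forall p, ~ body s p ->
    exists k dl, 0 < dl /\ forall z, d p z < dl -> outer s k z;
  outer_mono : forall k k' z, (k <= k')%nat -> outer s k z -> outer s k' z;
  inner_not_outer : forall k z, inner s k z -> ~ outer s k z;
  inner_near_body : forall p z k, body s p -> 2 * d p z < tol k -> inner s k z
}.

Definition ball_shape (x : T) (r : R) : shape T :=
  Shape (closed_ball d x r) (fun k z => d x z < r + tol k) (fun k z => r + tol k <= d x z).

Definition closed_shape (S : set T) (Y : nat -> T) : shape T :=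
  Shape S (fun k z => (exists x, S x) /\ exists i, d z (Y i) < tol k)
          (fun k z => forall q, S q -> tol k <= d z q).

Hypothesis Hm : is_metric d.

Lemma ball_shape_admissible x r : admissible (ball_shape x r).
Proof.
  unfold ball_shape, closed_ball. split; simpl.
  - intros p Hp. apply Rnot_le_lt in Hp.
    destruct (tol_small ((d x p - r) / 2)) as [k Hk]; [lra|].
    exists k, (tol k). split; [apply tol_pos|]. intros z Hz.
    pose proof (metric_tri Hm x z p). rewrite (metric_sym Hm z p) in H. lra.
  - intros k k' z Hk Hz. pose proof (tol_antimono _ _ Hk). lra.
  - intros k z Hin Hout. lra.
  - intros p z k Hp Hz. pose proof (metric_tri Hm x p z). pose proof (metric_nonneg Hm p z). lra.
Qed.

Lemma closed_shape_admissible S Y : m_closed d S ->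
  ((exists x, S x) -> (forall i, S (Y i)) /\
     (forall x, S x -> m_closure d (fun z => exists n, z = Y n) x)) ->
  admissible (closed_shape S Y).
Proof.
  intros Hclosed HY. split; simpl.
  - intros p Hp.
    assert (Hfar : exists eps, 0 < eps /\ forall q, S q -> eps <= d p q).
    { apply NNPP. intros Hno. apply Hp, Hclosed. intros eps Heps.
      apply NNPP. intros Hnone. apply Hno. exists eps. split; [exact Heps|].
      intros q Hq. apply Rnot_lt_le. intros Hlt. apply Hnone. eauto. }
    destruct Hfar as [eps [Heps Hfar]].
    destruct (tol_small (eps / 2)) as [k Hk]; [lra|].
    exists k, (tol k). split; [apply tol_pos|]. intros z Hz q Hq.
    pose proof (metric_tri Hm p z q). specialize (Hfar q Hq). lra.
  - intros k k' z Hk Hz q Hq. pose proof (tol_antimono _ _ Hk). specialize (Hz q Hq). lra.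
  - intros k z [Hex [i Hi]] Hout. specialize (Hout (Y i) (proj1 (HY Hex) i)). lra.
  - intros p z k Hp Hz. assert (Hex : exists x, S x) by eauto. split; [exact Hex|].
    destruct (proj2 (HY Hex) p Hp (tol k / 2)) as [y [[n ->] Hn]].
    { pose proof (tol_pos k). lra. }
    exists n. pose proof (metric_tri Hm z p (Y n)). rewrite (metric_sym Hm z p) in H. lra.
Qed.

Lemma dense_meets_inner (D : nat -> T)
  (HD : forall x, m_closure d (fun z => exists n, z = D n) x)
  (I : Type) (C : I -> shape T) (HC : forall i, admissible (C i)) p :
  (forall i, body (C i) p) ->
  forall k, exists j, 2 * d p (D j) < tol k /\ forall i, inner (C i) k (D j).
Proof.
  intros Hp k. destruct (HD p (tol k / 2)) as [y [[j ->] Hj]].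
  { pose proof (tol_pos k). lra. }
  exists j. split; [lra|]. intros i. apply (inner_near_body _ (HC i) p); [apply Hp | lra].
Qed.

(** Conversely, in a proper space, if the inner conditions of all levels are met
    simultaneously inside a fixed ball, the bodies have a common point: otherwise
    the open sets where some outer condition holds cover the ball, and a finite
    subcover yields a level at which an inner and an outer condition coincide. *)
Lemma proper_common_point (Hp : proper_metric d)
  (I : Type) (C : I -> shape T) (HC : forall i, admissible (C i)) (x0 : T) (r0 : R) :
  (forall k, exists z, d x0 z <= r0 /\ forall i, inner (C i) k z) ->
  exists p, forall i, body (C i) p.
Proof.
  intros Hwit. apply NNPP. intros Hno.
  set (U := fun (k : nat) p =>
    exists dl, 0 < dl /\ forall z, d p z < dl -> exists i, outer (C i) k z).
  destruct (Hp x0 r0 nat U) as [l Hl].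
  - intros k p [dl [Hdl Hout]]. exists dl. split; [exact Hdl|].
    intros y Hy. exists (dl - d p y). split; [lra|]. intros z Hz. apply Hout.
    pose proof (metric_tri Hm p y z). lra.
  - intros p _. assert (Hi : exists i, ~ body (C i) p).
    { apply not_all_not_ex. intros Hall. apply Hno. exists p. intros i. apply NNPP, Hall. }
    destruct Hi as [i Hi].
    destruct (outer_exhaust _ (HC i) p Hi) as [k [dl [Hdl Hout]]].
    exists k, dl. split; [exact Hdl|]. eauto.
  - set (K := list_max l). destruct (Hwit K) as [z [Hz Hinner]].
    destruct (Hl z Hz) as [k [Hk [dl [Hdl Hout]]]].
    destruct (Hout z) as [i Hi]; [rewrite (metric_refl Hm); exact Hdl|].
    assert (HkK : (k <= K)%nat).
    { assert (Hmax : Forall (fun k => (k <= list_max l)%nat) l) by (apply list_max_le; lia).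
      rewrite Forall_forall in Hmax. auto. }
    apply (inner_not_outer _ (HC i) K z (Hinner i)). eapply outer_mono; eauto.
Qed.

End Shapes.

Section Intersection.
Context {Omega : Type} (A : set Omega -> Prop) (X : Omega -> Type)
  (d : forall w, X w -> X w -> R) (L : (forall w, X w) -> Prop)
  (F : nat -> forall w, set (X w))
  (HA : sigma_algebra A) (HB : borel_field A X d L)
  (Hproper : forall w, proper_metric (d w))
  (HFmeas : forall n, A (fun w => exists x, F n w x))
  (HFclosed : forall n w, m_closed (d w) (F n w))
  (Y : nat -> nat -> forall w, X w) (HYL : forall n i, L (Y n i))
  (HYdense : forall n w, (exists x, F n w x) -> (forall i, F n w (Y n i w)) /\
     (forall x, F n w x -> m_closure (d w) (fun z => exists i, z = Y n i w) x))
  (D : nat -> forall w, X w) (HDL : forall n, L (D n))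
  (HDdense : forall w x, m_closure (d w) (fun z => exists n, z = D n w) x).

Let Hm w : is_metric (d w) := bf_metric _ _ _ _ HB w.

Lemma meas_dist_lt (x y : forall w, X w) a : L x -> L y -> A (fun w => d w (x w) (y w) < a).
Proof. intros Hx Hy. apply sublevel_of_borel, (bf_a _ _ _ _ HB); assumption. Qed.

Lemma paste_sections (sec : nat -> forall w, X w) (J : Omega -> nat) :
  (forall j, L (sec j)) -> (forall j, A (fun w => J w = j)) -> L (fun w => sec (J w) w).
Proof.
  intros Hsec HJ. apply (bf_b _ _ _ _ HB). intros x Hx. apply (borel_of_sublevels HA).
  intros a. eapply meas_ext.
  - apply (meas_union HA (fun j w => J w = j /\ d w (x w) (sec j w) < a)).
    intros j. apply (meas_and HA); [apply HJ | apply meas_dist_lt; auto].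
  - intros w; split.
    + intros [j [<- Hlt]]. exact Hlt.
    + intros Hlt. exists (J w). auto.
Qed.

(** The target [G_w(m, rho)]: the points of all [F n w] in the closed ball of center
    [D m w] and radius [rho], described by admissible shapes. *)
Definition target_shape w m rho (o : option nat) : shape (X w) :=
  match o with
  | None => ball_shape (d w) (D m w) rho
  | Some n => closed_shape (d w) (F n w) (fun i => Y n i w)
  end.

Lemma target_shape_admissible w m rho o : admissible (d w) (target_shape w m rho o).
Proof.
  destruct o as [n|]; simpl.
  - apply closed_shape_admissible; [apply Hm | apply HFclosed | apply HYdense].
  - apply ball_shape_admissible, Hm.
Qed.

Definition in_target w m rho p : Prop := forall o, body (target_shape w m rho o) p.

Lemma in_target_F w m rho p n : in_target w m rho p -> F n w p.
Proof. intros Hp. exact (Hp (Some n)). Qed.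

Definition meets w m rho c r : Prop :=
  exists p, in_target w m rho p /\ d w (D c w) p <= r.

Definition meets_shape w m rho c r (o : option (option nat)) : shape (X w) :=
  match o with
  | None => ball_shape (d w) (D c w) r
  | Some o' => target_shape w m rho o'
  end.

(** By compactness and density, [meets] is equivalent to a countable condition on
    the distances between the Borel sections [D j] and [Y n i]. *)
Lemma meets_iff w m rho c r : meets w m rho c r <-> forall k, exists j,
  d w (D m w) (D j w) < rho + tol k /\
  (forall n, (exists x, F n w x) /\ exists i, d w (D j w) (Y n i w) < tol k) /\
  d w (D c w) (D j w) < r + tol k.
Proof.
  assert (Hadm : forall o, admissible (d w) (meets_shape w m rho c r o)).
  { intros [o|]; [apply target_shape_admissible | apply ball_shape_admissible, Hm]. }
  split.
  - intros [p [Hp Hpc]] k.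
    destruct (dense_meets_inner (d w) (fun n => D n w) (HDdense w) _ _ Hadm p) with (k := k)
      as [j [_ Hj]].
    { intros [o|]; [apply Hp | exact Hpc]. }
    exists j. split; [apply (Hj (Some None))|]. split; [|apply (Hj None)].
    intros n. apply (Hj (Some (Some n))).
  - intros Hwit.
    destruct (proper_common_point (d w) (Hm w) (Hproper w) _ _ Hadm (D m w) (rho + 1))
      as [p Hp].
    + intros k. destruct (Hwit k) as [j [Hjm [HjF Hjc]]]. exists (D j w). split.
      * pose proof (tol_le1 k). lra.
      * intros [[n|]|]; simpl; auto.
    + exists p. split; [intros o; apply (Hp (Some o)) | apply (Hp None)].
Qed.

Lemma meas_meets m rho c r : A (fun w => meets w m rho c r).
Proof.
  eapply meas_ext; [|intros w; symmetry; apply meets_iff].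
  apply (meas_inter HA). intros k. apply (meas_union HA). intros j.
  repeat apply (meas_and HA); try apply meas_dist_lt; auto.
  apply (meas_inter HA). intros n. apply (meas_and HA); [apply HFmeas|].
  apply (meas_union HA). intros i. apply meas_dist_lt; auto.
Qed.

(** Nonemptiness of [G_w(m, rho)] is measurable: it means meeting some unit ball
    around a term of the dense sequence [D]. *)
Definition nonempty_target w m rho : Prop := exists p, in_target w m rho p.

Lemma meas_nonempty_target m rho : A (fun w => nonempty_target w m rho).
Proof.
  eapply meas_ext; [apply (meas_union HA (fun c w => meets w m rho c 1)); intros c;
    apply meas_meets|].
  intros w. split.
  - intros [c [p [Hp _]]]. exists p. exact Hp.
  - intros [p Hp]. destruct (HDdense w p 1) as [z [[c ->] Hc]]; [lra|].
    exists c, p. split; [exact Hp|]. rewrite (metric_sym (Hm w)). lra.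
Qed.

Fixpoint idx m rho (s : nat) (w : Omega) : nat :=
  match s with
  | O => least (fun j => meets w m rho j (tol 0))
  | S s' => least (fun j => meets w m rho j (tol (S s')) /\
                            d w (D (idx m rho s' w) w) (D j w) < tol s' + tol (S s'))
  end.

Lemma meas_idx m rho s : forall j, A (fun w => idx m rho s w = j).
Proof.
  induction s as [|s IH]; simpl.
  - apply (meas_least HA). intros j. apply meas_meets.
  - intros j. eapply meas_ext.
    + apply (meas_union HA (fun j0 w => idx m rho s w = j0 /\
        least (fun j => meets w m rho j (tol (S s)) /\
                        d w (D j0 w) (D j w) < tol s + tol (S s)) = j)).
      intros j0. apply (meas_and HA); [apply IH|].
      apply (meas_least HA (fun w j => meets w m rho j (tol (S s)) /\
                                       d w (D j0 w) (D j w) < tol s + tol (S s))).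
      intros j1. apply (meas_and HA); [apply meas_meets | apply meas_dist_lt; auto].
    + intros w. split.
      * intros [j0 [<- Hj]]. exact Hj.
      * intros Hj. exists (idx m rho s w). auto.
Qed.

Lemma meets_refine w m rho j0 s : meets w m rho j0 (tol s) ->
  exists j, meets w m rho j (tol (S s)) /\ d w (D j0 w) (D j w) < tol s + tol (S s).
Proof.
  intros [p [Hp Hp0]].
  destruct (HDdense w p (tol (S s))) as [z [[j ->] Hj]]; [apply tol_pos|].
  exists j. split.
  - exists p. split; [exact Hp|]. rewrite (metric_sym (Hm w)). lra.
  - pose proof (metric_tri (Hm w) (D j0 w) p (D j w)). lra.
Qed.

Section IndexSequence.
Variables (m : nat) (rho : R) (w : Omega).
Hypothesis Hne : nonempty_target w m rho.

Lemma idx_meets s : meets w m rho (idx m rho s w) (tol s).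
Proof.
  induction s as [|s IH]; simpl.
  - apply least_correct. destruct Hne as [p Hp].
    destruct (HDdense w p 1) as [z [[c ->] Hc]]; [lra|].
    exists c, p. split; [exact Hp|]. rewrite (metric_sym (Hm w)), tol_0. lra.
  - apply (least_correct _ (meets_refine w m rho _ s IH)).
Qed.

Lemma idx_step s :
  d w (D (idx m rho s w) w) (D (idx m rho (S s) w) w) < tol s + tol (S s).
Proof. apply (least_correct _ (meets_refine w m rho _ s (idx_meets s))). Qed.

Lemma idx_cauchy s N : (s <= N)%nat ->
  d w (D (idx m rho s w) w) (D (idx m rho N w) w) <= 3 * (tol s - tol N).
Proof.
  intros HsN. induction HsN as [|N _ IH].
  - rewrite (metric_refl (Hm w)). lra.
  - pose proof (idx_step N). rewrite tol_S in *.
    pose proof (metric_tri (Hm w) (D (idx m rho s w) w) (D (idx m rho N w) w)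
                                (D (idx m rho (S N) w) w)).
    lra.
Qed.

Definition is_limit (p : X w) : Prop :=
  in_target w m rho p /\ forall s, d w (D (idx m rho s w) w) p <= 3 * tol s.

Definition limit_shape (i : option nat + nat) : shape (X w) :=
  match i with
  | inl o => target_shape w m rho o
  | inr s => ball_shape (d w) (D (idx m rho s w) w) (3 * tol s)
  end.

Lemma limit_shape_witness k N : tol N < tol k / 4 ->
  exists z, d w (D (idx m rho 0 w) w) z <= 3 /\ forall i, inner (limit_shape i) k z.
Proof.
  intros HN. destruct (idx_meets N) as [pN [HpN HdN]].
  pose proof (tol_pos N). pose proof (tol_pos k).
  exists pN. split.
  { pose proof (idx_cauchy 0 N (Nat.le_0_l N)).
    pose proof (metric_tri (Hm w) (D (idx m rho 0 w) w) (D (idx m rho N w) w) pN).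
    rewrite tol_0 in *. lra. }
  intros [o|s]; simpl.
  - apply (inner_near_body _ _ (target_shape_admissible w m rho o) pN); [apply HpN|].
    rewrite (metric_refl (Hm w)). lra.
  - pose proof (metric_tri (Hm w) (D (idx m rho s w) w) (D (idx m rho N w) w) pN).
    pose proof (tol_pos s).
    destruct (Compare_dec.le_lt_dec s N) as [Hle|Hlt].
    + pose proof (idx_cauchy s N Hle). lra.
    + pose proof (idx_cauchy N s (Nat.lt_le_incl _ _ Hlt)) as Hsum.
      rewrite (metric_sym (Hm w) (D (idx m rho N w) w)) in Hsum.
      pose proof (tol_antimono _ _ (Nat.lt_le_incl _ _ Hlt)). lra.
Qed.

Lemma limit_exists : exists p, is_limit p.
Proof.
  assert (Hadm : forall i, admissible (d w) (limit_shape i)).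
  { intros [o|s]; [apply target_shape_admissible | apply ball_shape_admissible, Hm]. }
  destruct (proper_common_point (d w) (Hm w) (Hproper w) _ _ Hadm
              (D (idx m rho 0 w) w) 3) as [p Hp].
  - intros k. destruct (tol_small (tol k / 4)) as [N HN]; [pose proof (tol_pos k); lra|].
    exact (limit_shape_witness k N HN).
  - exists p. split; [intros o; apply (Hp (inl o)) | intros s; apply (Hp (inr s))].
Qed.

End IndexSequence.

Definition select m rho (fallback : forall w, X w) (w : Omega) : X w :=
  match excluded_middle_informative (nonempty_target w m rho) with
  | left _ => epsilon (inhabits (D 0%nat w)) (is_limit m rho w)
  | right _ => fallback w
  end.

Lemma select_limit m rho fallback w :
  nonempty_target w m rho -> is_limit m rho w (select m rho fallback w).
Proof.
  intros Hne. unfold select. destruct excluded_middle_informative; [|tauto].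
  apply epsilon_spec, limit_exists, Hne.
Qed.

Lemma select_in_target m rho fallback w :
  nonempty_target w m rho -> in_target w m rho (select m rho fallback w).
Proof. intros Hne. apply (select_limit m rho fallback w Hne). Qed.

Lemma select_fallback m rho fallback w :
  ~ nonempty_target w m rho -> select m rho fallback w = fallback w.
Proof. intros Hne. unfold select. destruct excluded_middle_informative; tauto. Qed.

Lemma select_borel m rho fallback : L fallback -> L (select m rho fallback).
Proof.
  intros Hfb. apply (bf_b _ _ _ _ HB). intros x Hx. apply (borel_of_sublevels HA). intros a.
  eapply meas_ext.
  - apply (meas_or HA
      (fun w => nonempty_target w m rho /\ exists s j, idx m rho s w = j /\
                  d w (x w) (D j w) < a - 3 * tol s)
      (fun w => ~ nonempty_target w m rho /\ d w (x w) (fallback w) < a)).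
    + apply (meas_and HA); [apply meas_nonempty_target|].
      do 2 (apply (meas_union HA); intro).
      apply (meas_and HA); [apply meas_idx | apply meas_dist_lt; auto].
    + apply (meas_and HA); [apply (meas_compl HA), meas_nonempty_target|].
      apply meas_dist_lt; auto.
  - intros w. destruct (classic (nonempty_target w m rho)) as [Hne|Hne].
    + rewrite (dist_lt_approx (Hm w) _ _ _ _ (proj2 (select_limit m rho fallback w Hne))).
      split; [intros [[_ [s [j [<- Hs]]]]|[Hne' _]]; [eauto | tauto]|].
      intros [s Hs]. left. split; [exact Hne|]. eauto.
    + rewrite (select_fallback m rho fallback w Hne). tauto.
Qed.

Definition in_all w (x : X w) : Prop := forall n, F n w x.

Lemma in_all_nonempty_iff w :
  (exists x, in_all w x) <-> exists r, nonempty_target w 0 (INR r).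
Proof.
  split.
  - intros [p Hp]. destruct (INR_unbounded (d w (D 0%nat w) p)) as [r Hr].
    exists r, p. intros [n|]; simpl; [apply Hp | unfold closed_ball; lra].
  - intros [r [p Hp]]. exists p. intros n. apply (in_target_F _ _ _ _ _ Hp).
Qed.

Lemma fallback_section : exists h, L h /\
  forall w, (exists x, in_all w x) -> in_all w (h w).
Proof.
  set (r w := least (fun r => nonempty_target w 0 (INR r))).
  exists (fun w => select 0 (INR (r w)) (D 0%nat) w). split.
  - apply (paste_sections (fun r => select 0 (INR r) (D 0%nat)) r).
    + intros k. apply select_borel, HDL.
    + apply (meas_least HA (fun w r => nonempty_target w 0 (INR r))).
      intros k. apply meas_nonempty_target.
  - intros w Hw n. apply in_all_nonempty_iff in Hw.
    apply (in_target_F w 0 (INR (r w))), select_in_target.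
    apply (least_correct _ Hw).
Qed.

(** Nonemptiness of the intersection is a countable union of measurable sets, and
    the sections [select m (tol r) h] form a dense sequence of the intersection. *)
Theorem intersection_borel_subfield : borel_subfield A X d L in_all.
Proof.
  split.
  { eapply meas_ext; [|intros w; symmetry; apply in_all_nonempty_iff].
    apply (meas_union HA). intros r. apply meas_nonempty_target. }
  destruct fallback_section as [h [Hh Hh_all]].
  set (pair n := Cantor.of_nat n).
  exists (fun n => select (fst (pair n)) (tol (snd (pair n))) h). split.
  { intros n. apply select_borel, Hh. }
  intros w Hw. split.
  - intros n k. destruct (classic (nonempty_target w (fst (pair n)) (tol (snd (pair n)))))
      as [Hne|Hne].
    + apply (in_target_F w (fst (pair n)) (tol (snd (pair n)))), select_in_target, Hne.
    + rewrite select_fallback by exact Hne. apply Hh_all, Hw.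
  - intros x Hx eps Heps. destruct (tol_small (eps / 2)) as [r Hr]; [lra|].
    destruct (HDdense w x (tol r)) as [z [[m ->] Hxm]]; [apply tol_pos|].
    assert (Hne : nonempty_target w m (tol r)).
    { exists x. intros [n|]; simpl; [apply Hx|].
      unfold closed_ball. rewrite (metric_sym (Hm w)). lra. }
    pose proof (select_in_target m (tol r) h w Hne None) as Hball. simpl in Hball.
    unfold closed_ball in Hball.
    exists (select m (tol r) h w). split.
    + exists (Cantor.to_nat (m, r)). unfold pair. rewrite Cantor.cancel_of_to. reflexivity.
    + pose proof (metric_tri (Hm w) x (D m w) (select m (tol r) h w)). lra.
Qed.

End Intersection.

Theorem mainTheorem7 (Omega : Type) (A : set Omega -> Prop) (X : Omega -> Type)
    (d : forall w, X w -> X w -> R) (L : (forall w, X w) -> Prop)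
    (F : nat -> forall w, set (X w)) :
  sigma_algebra A ->
  borel_field A X d L ->
  (forall w, proper_metric (d w)) ->
  (forall n, borel_subfield A X d L (F n)) ->
  (forall n w, m_closed (d w) (F n w)) ->
  borel_subfield A X d L (fun w x => forall n, F n w x).
Proof.
  intros HA HB Hproper HF Hclosed.
  destruct (bf_c _ _ _ _ HB) as [D [HDL HDdense]].
  destruct (choice _ (fun n => proj2 (HF n))) as [Y HY].
  exact (intersection_borel_subfield A X d L F HA HB Hproper (fun n => proj1 (HF n)) Hclosed
           Y (fun n => proj1 (HY n)) (fun n => proj2 (HY n)) D HDL HDdense).
Qed.
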